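(* If $(m,n)\in\mathcal{P}_\lambda$, then $(m+k,n)\in\mathcal{P}_\lambda$ and $(m,n+k)\in\mathcal{P}_\lambda$ for every $k\in\mathbb{Z}_+$. Likewise, if $(m,n)\in\overline{\mathcal{P}}_\lambda$, then $(m+k,n)\in\overline{\mathcal{P}}_\lambda$ and $(m,n+k)\in\overline{\mathcal{P}}_\lambda$ for every $k\in\mathbb{Z}_+$.
   Context: Fix $p\in(0,1)$, $q\in[0,1]$, $\lambda>0$. $\mathbb{Z}_+=\{0,1,2,\dots\}$. Let $d:[0,\infty)\to\mathbb{R}$ satisfy: (C1) $d(0)>0$; (C2) $d$ is convex and increasing; (C3) for every $\delta>0$, $r\mapsto d(r+\delta)-d(r)$ increases to $\infty$ as $r\to\infty$. Write $d(x,y):=d(\sqrt{x^2+y^2})$ for $(x,y)\in\mathbb{R}^2$ (so $d(1)=d(1,0)=d(0,1)$), and assume (C4): $d(x,y)$ is positive, twice continuously partially differentiable, with $d_{xx},d_{xy},d_{yy}>0$ for all $x,y\ge0$. Set $\Delta_1(m,n)=d(m+1,n)-d(m,n)$, $\Delta_2(m,n)=d(m,n+1)-d(m,n)$, $\Delta_q(m,n)=q\Delta_1(m,n)+(1-q)\Delta_2(m,n)$ for $(m,n)\in\mathbb{Z}_+^2$. Relay placement MDP: the state space is $\{(m,n,z):(m,n)\in\mathbb{Z}_+^2,\ z\in\{\mathsf e,\mathsf c\}\}\cup\{\phi\}$ ($(m,n)$ is the displacement of the deploying agent from the last placed relay, or from the origin if none; $z=\mathsf e$ means the lattice path has ended,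 $z=\mathsf c$ that it continues). Actions $u\in\{0,1\}$ ($u=1$: place a relay). From $(m,n,\mathsf c)$ with $u=0$ the next state is $(m+1,n,\mathsf c)$ w.p. $(1-p)q$, $(m+1,n,\mathsf e)$ w.p. $pq$, $(m,n+1,\mathsf c)$ w.p. $(1-p)(1-q)$, $(m,n+1,\mathsf e)$ w.p. $p(1-q)$; with $u=1$ it is $(1,0,\mathsf c)$, $(1,0,\mathsf e)$, $(0,1,\mathsf c)$, $(0,1,\mathsf e)$ with these same respective probabilities. At $(m,n,\mathsf e)$ only $u=1$ is allowed and the next state is the absorbing cost-free state $\phi$. One-step cost: $d(m,n)$ at $(m,n,\mathsf e)$; $\lambda+d(m,n)$ if $u=1$ at $(m,n,\mathsf c)$; $0$ otherwise. $J_\lambda(m,n)$ is the optimal expected total cost (infimum over all, possibly history-dependent and randomized, policies) starting from $(m,n,\mathsf c)$; it satisfies the Bellman equation $J_\lambda(m,n)=\min\{c_p(m,n),c_{np}(m,n)\}$, where $c_p(m,n)=\lambda+d(m,n)+(1-p)(1-q)J_\lambda(0,1)+(1-p)qJ_\lambda(1,0)+p\,d(1)$ and $c_{np}(m,n)=(1-p)qJ_\lambda(m+1,n)+(1-p)(1-q)J_\lambda(m,n+1)+pq\,d(m+1,n)+p(1-q)\,d(m,n+1)$. The optimal placement set is $\mathcal{P}_\lambda=\{(m,n)\in\mathbb{Z}_+^2: c_p(m,n)\le c_{np}(m,n)\}$. The one-step-look-ahead (OSLA) placement set is $\overline{\mathcal{P}}_\lambda=\{(m,n)\in\mathbb{Z}_+^2: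 p(\lambda+J_\lambda(0,0))\le \Delta_q(m,n)\}$. *)

From Stdlib Require Import Reals Lra List.
Import ListNotations.
Open Scope R_scope.

Definition d2 (d : R -> R) (x y : R) : R := d (sqrt (x ^ 2 + y ^ 2)).

Definition dmn (d : R -> R) (m n : nat) : R := d2 d (INR m) (INR n).

Definition Delta1 d m n := dmn d (S m) n - dmn d m n.
Definition Delta2 d m n := dmn d m (S n) - dmn d m n.
Definition Deltaq d (q : R) m n := q * Delta1 d m n + (1 - q) * Delta2 d m n.

(** (C1)-(C3) on [0,oo). "Increasing" is read as non-decreasing. *)
Definition cond_C1 (d : R -> R) : Prop := 0 < d 0.
Definition cond_C2 (d : R -> R) : Prop :=
  (forall x y t, 0 <= x -> 0 <= y -> 0 <= t <= 1 ->
     d (t * x + (1 - t) * y) <= t * d x + (1 - t) * d y) /\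
  (forall x y, 0 <= x -> x <= y -> d x <= d y).
Definition cond_C3 (d : R -> R) : Prop :=
  forall delta, 0 < delta ->
    (forall r s, 0 <= r -> r <= s -> d (r + delta) - d r <= d (s + delta) - d s) /\
    (forall M, exists r0, 0 <= r0 /\ forall r, r0 <= r -> M < d (r + delta) - d r).

Definition cont2 (f : R -> R -> R) : Prop :=
  forall x y eps, 0 < eps -> exists delta, 0 < delta /\
    forall x' y', Rabs (x' - x) < delta -> Rabs (y' - y) < delta ->
      Rabs (f x' y' - f x y) < eps.

(** (C4): d(x,y) positive for x,y>=0, twice continuously partially differentiable
    (on R^2, its natural domain), with positive second partials on the open quadrant. *)
Definition cond_C4 (d : R -> R) : Prop :=
  exists dx dy dxx dxy dyx dyy : R -> R -> R,
    (forall x y, derivable_pt_lim (fun t => d2 d t y) x (dx x y)) /\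
    (forall x y, derivable_pt_lim (fun t => d2 d x t) y (dy x y)) /\
    (forall x y, derivable_pt_lim (fun t => dx t y) x (dxx x y)) /\
    (forall x y, derivable_pt_lim (fun t => dx x t) y (dxy x y)) /\
    (forall x y, derivable_pt_lim (fun t => dy t y) x (dyx x y)) /\
    (forall x y, derivable_pt_lim (fun t => dy x t) y (dyy x y)) /\
    cont2 dxx /\ cont2 dxy /\ cont2 dyx /\ cont2 dyy /\
    (forall x y, 0 <= x -> 0 <= y -> 0 < d2 d x y) /\
    (forall x y, 0 < x -> 0 < y ->
       0 < dxx x y /\ 0 < dxy x y /\ 0 < dyy x y).

(** States: (m,n,c), (m,n,e), phi. *)
Inductive state : Type :=
| Cont (m n : nat)
| End (m n : nat)
| Phi.

(** A history is the list of past (state, action) pairs; action true = place (u=1). *)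
Definition history := list (state * bool).

(** A general (history-dependent, randomized) policy: probability of u=1
    given the past history and current state. At End states only u=1 is
    allowed, so the policy value there is irrelevant. *)
Definition policy := history -> state -> R.

Definition valid_policy (pi : policy) : Prop :=
  forall h s, 0 <= pi h s <= 1.

Definition step_exp (p q : R) (f : state -> R) (m n : nat) : R :=
  (1 - p) * q * f (Cont (S m) n) + p * q * f (End (S m) n)
  + (1 - p) * (1 - q) * f (Cont m (S n)) + p * (1 - q) * f (End m (S n)).

Fixpoint costN (p q lam : R) (d : R -> R) (pi : policy) (N : nat)
    (h : history) (s : state) {struct N} : R :=
  match N with
  | O => 0
  | S N' =>
    match s with
    | Phi => costN p q lam d pi N' (h ++ [(Phi, true)]) Phi
    | End m n => dmn d m n + costN p q lam d pi N' (h ++ [(s, true)]) Phi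
    | Cont m n =>
        let a := pi h s in
        a * (lam + dmn d m n
               + step_exp p q (costN p q lam d pi N' (h ++ [(s, true)])) 0 0)
        + (1 - a) * step_exp p q (costN p q lam d pi N' (h ++ [(s, false)])) m n
    end
  end.

(** Costs are nonnegative,
    so the partial expected costs are nondecreasing; a policy whose partial
    costs do not converge has infinite total cost and does not matter for
    the infimum. *)
Definition total_cost (p q lam : R) (d : R -> R) (pi : policy) (m n : nat) (v : R) : Prop :=
  Un_cv (fun N => costN p q lam d pi N [] (Cont m n)) v.

Definition is_optimal_cost (p q lam : R) (d : R -> R) (J : nat -> nat -> R) : Prop :=
  forall m n,
    (forall pi v, valid_policy pi -> total_cost p q lam d pi m n v -> J m n <= v) /\
    (forall eps, 0 < eps -> exists pi v,
        valid_policy pi /\ total_cost p q lam d pi m n v /\ v < J m n + eps).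

Definition c_p (p q lam : R) (d : R -> R) (J : nat -> nat -> R) (m n : nat) : R :=
  lam + dmn d m n + (1 - p) * (1 - q) * J 0%nat 1%nat + (1 - p) * q * J 1%nat 0%nat
  + p * d 1.

Definition c_np (p q : R) (d : R -> R) (J : nat -> nat -> R) (m n : nat) : R :=
  (1 - p) * q * J (S m) n + (1 - p) * (1 - q) * J m (S n)
  + p * q * dmn d (S m) n + p * (1 - q) * dmn d m (S n).

Definition in_P (p q lam : R) (d : R -> R) (J : nat -> nat -> R) (m n : nat) : Prop :=
  c_p p q lam d J m n <= c_np p q d J m n.

Definition in_Pbar (p q lam : R) (d : R -> R) (J : nat -> nat -> R) (m n : nat) : Prop :=
  p * (lam + J 0%nat 0%nat) <= Deltaq d q m n.

(** For the one-step-look-ahead set this is the statement that the expected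
    increment Δ_q(m,n) is nondecreasing in m and in n, which follows from the
    nonnegativity of the (pure and mixed) second differences of d(x,y); these
    are obtained from (C4) by the mean value theorem.

    For the optimal set we first justify the Bellman equation
    J = min(c_p, c_np) and the bounds d(m,n) <= J(m,n) <= c_p(m,n) directly
    from the definition of J as an infimum over history-dependent randomized
    policies (first-step analysis, splicing of ε-optimal policies, and a limit
    argument for nondecreasing partial costs). Writing G = J - d and
    A = c_p - d (a constant), the Bellman equation becomes the fixed-point
    equation G = min(A, (1-p)q G(m+1,n) + (1-p)(1-q) G(m,n+1) + Δ_q(m,n)).
    An abstract contraction lemma shows that any bounded solution of such an
    equation with nondecreasing Δ is nondecreasing, and so is the second
    argument of the min; since (m,n) ∈ P_λ iff A does not exceed it, the
    theorem follows. *)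

From Pilot Require Import Defs.
From Stdlib Require Import Reals Lra Psatz List ClassicalEpsilon.
Import ListNotations.
Open Scope R_scope.

(** [Reals] exports its own [d2]; we mean the two-variable cost of [Defs]. *)
Local Notation d2 := Defs.d2.

Lemma nondecreasing_of_deriv_nonneg (f f' : R -> R) (a b : R) :
  (forall x, derivable_pt_lim f x (f' x)) -> a <= b ->
  (forall c, a < c < b -> 0 <= f' c) -> f a <= f b.
Proof.
  intros Hder Hab Hpos. destruct (Rle_lt_or_eq_dec _ _ Hab) as [Hlt | ->]; [|lra].
  destruct (MVT_cor2 f f' a b Hlt (fun c _ => Hder c)) as [c [Hmvt Hc]].
  assert (0 <= f' c) by (apply Hpos; lra). nra.
Qed.

Lemma cont2_nonneg_closed_quadrant (f : R -> R -> R) (x y : R) :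
  cont2 f -> (forall x y, 0 < x -> 0 < y -> 0 < f x y) ->
  0 <= x -> 0 <= y -> 0 <= f x y.
Proof.
  intros Hcont Hpos Hx Hy. destruct (Rle_or_lt 0 (f x y)) as [|Hneg]; [assumption|].
  destruct (Hcont x y (- f x y)) as [delta [Hdelta Hclose]]; [lra|].
  specialize (Hclose (x + delta / 2) (y + delta / 2)).
  rewrite !Rabs_right in Hclose by lra.
  specialize (Hclose ltac:(lra) ltac:(lra)).
  assert (0 < f (x + delta / 2) (y + delta / 2)) by (apply Hpos; lra).
  apply Rabs_def2 in Hclose. lra.
Qed.

Lemma unit_increments_increase (f f' : R -> R) (x : R) :
  (forall t, derivable_pt_lim f t (f' t)) ->
  (forall s t, x <= s <= t -> f' s <= f' t) ->
  f (x + 1) - f x <= f (x + 1 + 1) - f (x + 1).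
Proof.
  intros Hder Hmono.
  destruct (MVT_cor2 f f' x (x + 1)) as [c1 [E1 Hc1]]; [lra | intros; apply Hder |].
  destruct (MVT_cor2 f f' (x + 1) (x + 1 + 1)) as [c2 [E2 Hc2]]; [lra | intros; apply Hder |].
  assert (f' c1 <= f' c2) by (apply Hmono; lra). lra.
Qed.

Lemma C4_monotone_partials (d : R -> R) : cond_C4 d ->
  exists dx dy : R -> R -> R,
    (forall x y, derivable_pt_lim (fun t => d2 d t y) x (dx x y)) /\
    (forall x y, derivable_pt_lim (fun t => d2 d x t) y (dy x y)) /\
    (forall x1 x2 y1 y2, 0 <= x1 <= x2 -> 0 <= y1 <= y2 -> dx x1 y1 <= dx x2 y2) /\
    (forall x y1 y2, 0 <= x -> 0 <= y1 <= y2 -> dy x y1 <= dy x y2).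
Proof.
  intros (dx & dy & dxx & dxy & dyx & dyy & Hdx & Hdy & Hdxx & Hdxy & _ & Hdyy
          & Cxx & Cxy & _ & Cyy & _ & Hsec).
  exists dx, dy. split; [exact Hdx|]. split; [exact Hdy|].
  assert (Hpos : forall g : R -> R -> R, cont2 g ->
            (forall x y, 0 < x -> 0 < y -> 0 < g x y) ->
            forall x y, 0 <= x -> 0 <= y -> 0 <= g x y)
    by (intros; apply cont2_nonneg_closed_quadrant; auto).
  assert (Nxx := Hpos dxx Cxx ltac:(intros; apply Hsec; auto)).
  assert (Nxy := Hpos dxy Cxy ltac:(intros; apply Hsec; auto)).
  assert (Nyy := Hpos dyy Cyy ltac:(intros; apply Hsec; auto)).
  split.
  - intros x1 x2 y1 y2 Hx Hy.
    apply Rle_trans with (dx x2 y1).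
    + apply (nondecreasing_of_deriv_nonneg (fun t => dx t y1) (fun t => dxx t y1));
        [intros; apply Hdxx | lra | intros; apply Nxx; lra].
    + apply (nondecreasing_of_deriv_nonneg (fun t => dx x2 t) (fun t => dxy x2 t));
        [intros; apply Hdxy | lra | intros; apply Nxy; lra].
  - intros x y1 y2 Hx Hy.
    apply (nondecreasing_of_deriv_nonneg (fun t => dy x t) (fun t => dyy x t));
      [intros; apply Hdyy | lra | intros; apply Nyy; lra].
Qed.

Lemma C4_second_differences (d : R -> R) : cond_C4 d ->
  forall x y, 0 <= x -> 0 <= y ->
    d2 d (x + 1) y - d2 d x y <= d2 d (x + 1 + 1) y - d2 d (x + 1) y /\
    d2 d x (y + 1) - d2 d x y <= d2 d x (y + 1 + 1) - d2 d x (y + 1) /\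
    d2 d (x + 1) y - d2 d x y <= d2 d (x + 1) (y + 1) - d2 d x (y + 1).
Proof.
  intros HC4 x y Hx Hy.
  destruct (C4_monotone_partials d HC4) as (dx & dy & Hdx & Hdy & Mx & My).
  split; [|split].
  - apply (unit_increments_increase (fun t => d2 d t y) (fun t => dx t y));
      [auto | intros; apply Mx; lra].
  - apply (unit_increments_increase (fun t => d2 d x t) (fun t => dy x t));
      [auto | intros; apply My; lra].
  - assert (Hmix : d2 d x (y + 1) - d2 d x y <= d2 d (x + 1) (y + 1) - d2 d (x + 1) y).
    { apply (nondecreasing_of_deriv_nonneg (fun t => d2 d t (y + 1) - d2 d t y)
               (fun t => dx t (y + 1) - dx t y)); [| lra |].
      - intros t. apply derivable_pt_lim_minus; apply Hdx.
      - intros c Hc. assert (dx c y <= dx c (y + 1)) by (apply Mx; lra). lra. }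
    lra.
Qed.

Lemma Deltaq_nondecreasing (d : R -> R) (q : R) : cond_C4 d -> 0 <= q <= 1 ->
  forall m n, Deltaq d q m n <= Deltaq d q (S m) n /\ Deltaq d q m n <= Deltaq d q m (S n).
Proof.
  intros HC4 Hq m n.
  destruct (C4_second_differences d HC4 (INR m) (INR n) (pos_INR m) (pos_INR n))
    as (Sxx & Syy & Sxy).
  unfold Deltaq, Delta1, Delta2, dmn. rewrite !S_INR. split; nra.
Qed.

Lemma dmn_unit (d : R -> R) : dmn d 1 0 = d 1 /\ dmn d 0 1 = d 1.
Proof.
  unfold dmn, d2; simpl.
  replace (1 * (1 * 1) + 0 * (0 * 1)) with 1 by ring.
  replace (0 * (0 * 1) + 1 * (1 * 1)) with 1 by ring.
  rewrite sqrt_1. split; reflexivity.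
Qed.

Lemma dmn_nonneg (d : R -> R) : cond_C4 d -> forall m n, 0 <= dmn d m n.
Proof.
  intros (dx & dy & dxx & dxy & dyx & dyy & HC4) m n.
  apply Rlt_le, HC4; apply pos_INR.
Qed.

Lemma dmn_nondecreasing (d : R -> R) : cond_C2 d ->
  forall m n, dmn d m n <= dmn d (S m) n /\ dmn d m n <= dmn d m (S n).
Proof.
  intros [_ Hinc] m n. unfold dmn, d2. rewrite !S_INR.
  pose proof (pos_INR m); pose proof (pos_INR n).
  split; apply Hinc; try apply sqrt_pos; apply sqrt_le_1_alt; nra.
Qed.

Section CostFunctional.

Variables (p q lam : R) (d : R -> R).
Hypotheses (Hp : 0 <= p <= 1) (Hq : 0 <= q <= 1) (Hlam : 0 <= lam)
           (Hd : forall m n, 0 <= dmn d m n).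

Local Notation cost := (costN p q lam d).

Lemma costN_Phi pi N h : cost pi N h Phi = 0.
Proof. revert h; induction N; intros h; simpl; auto. Qed.

Lemma costN_End pi N h m n : cost pi (S N) h (End m n) = dmn d m n.
Proof. simpl. rewrite costN_Phi. ring. Qed.

Lemma costN_Cont pi N h m n : cost pi (S N) h (Cont m n) =
  pi h (Cont m n) * (lam + dmn d m n + step_exp p q (cost pi N (h ++ [(Cont m n, true)])) 0 0)
  + (1 - pi h (Cont m n)) * step_exp p q (cost pi N (h ++ [(Cont m n, false)])) m n.
Proof. reflexivity. Qed.

Lemma step_exp_mono (f g : state -> R) m n :
  (forall s, f s <= g s) -> step_exp p q f m n <= step_exp p q g m n.
Proof.
  intros H. unfold step_exp.
  pose proof (H (Cont (S m) n)); pose proof (H (End (S m) n));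
  pose proof (H (Cont m (S n))); pose proof (H (End m (S n))).
  assert (0 <= 1 - p) by lra; assert (0 <= 1 - q) by lra.
  repeat apply Rplus_le_compat; apply Rmult_le_compat_l; auto; apply Rmult_le_pos; lra.
Qed.

Lemma step_exp_nonneg (f : state -> R) m n :
  (forall s, 0 <= f s) -> 0 <= step_exp p q f m n.
Proof.
  intros H. replace 0 with (step_exp p q (fun _ => 0) m n) by (unfold step_exp; ring).
  apply step_exp_mono; auto.
Qed.

Lemma convex_comb_mono (a x x' y y' : R) :
  0 <= a <= 1 -> x <= x' -> y <= y' -> a * x + (1 - a) * y <= a * x' + (1 - a) * y'.
Proof. intros. apply Rplus_le_compat; apply Rmult_le_compat_l; lra. Qed.

Variable pi : policy.
Hypothesis Hpi : valid_policy pi.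

Lemma costN_nonneg N : forall h s, 0 <= cost pi N h s.
Proof.
  induction N as [|N IH]; intros h s; [simpl; lra|].
  destruct s as [m n|m n|].
  - rewrite costN_Cont.
    replace 0 with (pi h (Cont m n) * 0 + (1 - pi h (Cont m n)) * 0) by ring.
    apply convex_comb_mono; [apply Hpi | |]; [| apply step_exp_nonneg; auto].
    pose proof (Hd m n). pose proof (step_exp_nonneg (cost pi N (h ++ [(Cont m n, true)])) 0 0 (IH _)).
    lra.
  - rewrite costN_End. apply Hd.
  - rewrite costN_Phi. lra.
Qed.

Lemma costN_growing N : forall h s, cost pi N h s <= cost pi (S N) h s.
Proof.
  induction N as [|N IH]; intros h s; [apply (costN_nonneg 1)|].
  destruct s as [m n|m n|].
  - rewrite !costN_Cont. apply convex_comb_mono; [apply Hpi | |].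
    + apply Rplus_le_compat_l, step_exp_mono, IH.
    + apply step_exp_mono, IH.
  - rewrite !costN_End. lra.
  - rewrite !costN_Phi. lra.
Qed.

(** If d is nondecreasing along the lattice, the path ends within N steps with
    probability at least 1-(1-p)^N, at a cost at least d(m,n). *)
Lemma costN_lower_bound :
  (forall m n, dmn d m n <= dmn d (S m) n /\ dmn d m n <= dmn d m (S n)) ->
  forall N h m n, (1 - (1 - p) ^ N) * dmn d m n <= cost pi (S N) h (Cont m n).
Proof.
  intros Hmono N. induction N as [|N IH]; intros h m n.
  - replace ((1 - (1 - p) ^ 0) * dmn d m n) with 0 by (simpl; ring).
    apply (costN_nonneg 1).
  - rewrite costN_Cont.
    set (t := (1 - p) ^ N). assert (Ht : 0 <= t <= 1).
    { unfold t. clear IH. induction N as [|N IHN]; simpl; nra. }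
    change ((1 - p) ^ S N) with ((1 - p) * t).
    set (D := dmn d m n). assert (HD : 0 <= D) by apply Hd.
    replace ((1 - (1 - p) * t) * D) with
      (pi h (Cont m n) * ((1 - (1 - p) * t) * D) + (1 - pi h (Cont m n)) * ((1 - (1 - p) * t) * D))
      by ring.
    apply convex_comb_mono; [apply Hpi | |].
    + pose proof (step_exp_nonneg (cost pi (S N) (h ++ [(Cont m n, true)])) 0 0
                    (costN_nonneg _ _)).
      assert ((1 - p) * t * D >= 0) by (apply Rle_ge, Rmult_le_pos; [apply Rmult_le_pos|]; lra).
      lra.
    + set (h' := h ++ [(Cont m n, false)]).
      replace ((1 - (1 - p) * t) * D) with (step_exp p q (fun _ => (1 - t) * D + t * D) m n
                                            - (1 - p) * t * D) by (unfold step_exp; ring).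
      apply Rle_trans with (step_exp p q (fun s => match s with
                              | Cont i j => (1 - t) * dmn d i j | End i j => dmn d i j | Phi => 0 end) m n).
      * unfold step_exp; cbv beta iota. destruct (Hmono m n) as [M1 M2]. fold D in M1, M2.
        assert (0 <= ((1 - p) * (1 - t) + p) * q * (dmn d (S m) n - D))
          by (apply Rmult_le_pos; [apply Rmult_le_pos|]; nra).
        assert (0 <= ((1 - p) * (1 - t) + p) * (1 - q) * (dmn d m (S n) - D))
          by (apply Rmult_le_pos; [apply Rmult_le_pos|]; nra).
        nra.
      * apply step_exp_mono. intros [i j|i j|].
        -- apply IH.
        -- rewrite costN_End. lra.
        -- rewrite costN_Phi. lra.
Qed.

End CostFunctional.

Definition continuation (pi : policy) (x : state * bool) : policy :=
  fun h s => pi (x :: h) s.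

(** The state from which the process described by (h, s) was started. *)
Definition origin (h : history) (s : state) : state :=
  match h with [] => s | (y, _) :: _ => y end.

Lemma costN_continuation p q lam d pi x N : forall h s,
  costN p q lam d pi N (x :: h) s = costN p q lam d (continuation pi x) N h s.
Proof.
  induction N as [|N IH]; intros h s; [reflexivity|].
  destruct s; simpl; unfold step_exp; rewrite ?IH; reflexivity.
Qed.

Lemma costN_origin_congr p q lam d (pi pi' : policy) N : forall h s,
  (forall h' s', origin h' s' = origin h s -> pi h' s' = pi' h' s') ->
  costN p q lam d pi N h s = costN p q lam d pi' N h s.
Proof.
  induction N as [|N IH]; intros h s Hagree; [reflexivity|].
  assert (Horig : forall b s', origin (h ++ [(s, b)]) s' = origin h s)
    by (intros b s'; destruct h as [|[y c] h]; reflexivity).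
  destruct s as [m n|m n|]; simpl.
  - unfold step_exp. rewrite (Hagree h (Cont m n) eq_refl).
    rewrite !(IH (h ++ [(Cont m n, true)])), !(IH (h ++ [(Cont m n, false)])); try reflexivity;
      intros h' s' E; apply Hagree; rewrite E; apply Horig.
  - rewrite (IH (h ++ [(End m n, true)])); [reflexivity|].
    intros h' s' E; apply Hagree; rewrite E; apply Horig.
  - rewrite (IH (h ++ [(Phi, true)])); [reflexivity|].
    intros h' s' E; apply Hagree; rewrite E; apply Horig.
Qed.

(** The right-hand side of the Bellman equation at (m,n), for the action
    "place" taken with probability [a], when the cost-to-go is [fT] after a
    placement and [fF] otherwise. *)
Definition lookahead (p q lam : R) (d : R -> R) (a : R) (fT fF : nat -> nat -> R)
    (m n : nat) : R :=
  a * (lam + dmn d m n + p * d 1) + (1 - a) * (p * q * dmn d (S m) n + p * (1 - q) * dmn d m (S n))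
  + a * (1 - p) * q * fT 1%nat 0%nat + a * (1 - p) * (1 - q) * fT 0%nat 1%nat
  + (1 - a) * (1 - p) * q * fF (S m) n + (1 - a) * (1 - p) * (1 - q) * fF m (S n).

Lemma lookahead_mix p q lam d a J m n :
  lookahead p q lam d a J J m n = a * c_p p q lam d J m n + (1 - a) * c_np p q d J m n.
Proof. unfold lookahead, c_p, c_np. ring. Qed.

Lemma costN_first_step p q lam d pi N m n :
  costN p q lam d pi (S (S N)) [] (Cont m n) =
  lookahead p q lam d (pi [] (Cont m n))
    (fun i j => costN p q lam d (continuation pi (Cont m n, true)) (S N) [] (Cont i j))
    (fun i j => costN p q lam d (continuation pi (Cont m n, false)) (S N) [] (Cont i j)) m n.
Proof.
  destruct (dmn_unit d) as [E10 E01].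
  rewrite costN_Cont. unfold step_exp. simpl ([] ++ _).
  rewrite !costN_continuation, !costN_End, E10, E01.
  unfold lookahead. ring.
Qed.

Lemma Un_cv_const (c : R) : Un_cv (fun _ => c) c.
Proof. intros eps Heps. exists O. intros. unfold R_dist. rewrite Rminus_diag, Rabs_R0. exact Heps. Qed.

Lemma Un_cv_unshift (u : nat -> R) (l : R) : Un_cv (fun N => u (S N)) l -> Un_cv u l.
Proof.
  intros H eps Heps. destruct (H eps Heps) as [N HN]. exists (S N). intros k Hk.
  destruct k as [|k]; [lia|]. apply HN. lia.
Qed.

(** No convergence of u is assumed: it follows from the
    bound when w > 0, and the term is irrelevant when w = 0. *)
Lemma absorb_limit (u r : nat -> R) (w J0 v : R) :
  Un_growing u -> Un_growing r -> 0 <= w -> (forall l, Un_cv u l -> J0 <= l) ->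
  (forall N, w * u N + r N <= v) -> forall N, w * J0 + r N <= v.
Proof.
  intros Hu Hr Hw HJ Hb N.
  destruct (Req_dec w 0) as [Hw0 | Hw0]; [specialize (Hb N); subst w; lra|].
  assert (Hr_ge : forall k, r N <= r (k + N)%nat)
    by (intros k; apply Rge_le, growing_prop; [exact Hr | lia]).
  assert (Hub : has_ub u).
  { exists ((v - r N) / w). intros x [k ->].
    apply (Rmult_le_reg_l w); [lra|].
    replace (w * ((v - r N) / w)) with (v - r N) by (field; lra).
    pose proof (Hb (k + N)%nat); pose proof (Hr_ge k).
    assert (w * u k <= w * u (k + N)%nat)
      by (apply Rmult_le_compat_l, Rge_le, growing_prop; [lra | exact Hu | lia]).
    lra. }
  destruct (growing_cv u Hu Hub) as [l Hl].
  apply Rle_trans with (w * l + r N).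
  - apply Rplus_le_compat_r, Rmult_le_compat_l; auto.
  - apply Rle_cv_lim with (Un := fun k => w * u (k + N)%nat + r N) (Vn := fun _ => v).
    + intros k. pose proof (Hb (k + N)%nat); pose proof (Hr_ge k). lra.
    + apply CV_plus; [apply (CV_mult (fun _ => w)) | ]; auto using Un_cv_const, CV_shift'.
    + apply Un_cv_const.
Qed.

Lemma Un_cv_tail (u : nat -> R) (l : R) : Un_cv u l -> Un_cv (fun N => u (S N)) l.
Proof.
  intros H eps Heps. destruct (H eps Heps) as [N HN]. exists N. intros k Hk. apply HN. lia.
Qed.

Lemma Un_cv_ext (u w : nat -> R) (l : R) : (forall N, u N = w N) -> Un_cv w l -> Un_cv u l.
Proof. intros E H eps Heps. destruct (H eps Heps) as [N HN]. exists N. intros k Hk. rewrite E. auto. Qed.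

Lemma scaled_growing (u : nat -> R) (w : R) :
  Un_growing u -> 0 <= w -> forall N, w * u N <= w * u (S N).
Proof. intros Hu Hw N. apply Rmult_le_compat_l; auto. Qed.

Section LookaheadProperties.

Variables (p q lam : R) (d : R -> R) (a : R).
Hypotheses (Hp : 0 <= p <= 1) (Hq : 0 <= q <= 1) (Ha : 0 <= a <= 1).

Lemma lookahead_limit_lower (fT fF : nat -> nat -> nat -> R) (gT gF : nat -> nat -> R)
    (m n : nat) (v : R) :
  (forall i j, Un_growing (fun N => fT N i j)) ->
  (forall i j, Un_growing (fun N => fF N i j)) ->
  (forall i j l, Un_cv (fun N => fT N i j) l -> gT i j <= l) ->
  (forall i j l, Un_cv (fun N => fF N i j) l -> gF i j <= l) ->
  (forall N, lookahead p q lam d a (fT N) (fF N) m n <= v) ->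
  lookahead p q lam d a gT gF m n <= v.
Proof.
  intros GT GF LT LF Hb. unfold lookahead in *.
  set (K := a * (lam + dmn d m n + p * d 1)
            + (1 - a) * (p * q * dmn d (S m) n + p * (1 - q) * dmn d m (S n))) in *.
  set (w1 := a * (1 - p) * q) in *. set (w2 := a * (1 - p) * (1 - q)) in *.
  set (w3 := (1 - a) * (1 - p) * q) in *. set (w4 := (1 - a) * (1 - p) * (1 - q)) in *.
  assert (W1 : 0 <= w1) by (unfold w1; apply Rmult_le_pos; [apply Rmult_le_pos|]; lra).
  assert (W2 : 0 <= w2) by (unfold w2; apply Rmult_le_pos; [apply Rmult_le_pos|]; lra).
  assert (W3 : 0 <= w3) by (unfold w3; apply Rmult_le_pos; [apply Rmult_le_pos|]; lra).
  assert (W4 : 0 <= w4) by (unfold w4; apply Rmult_le_pos; [apply Rmult_le_pos|]; lra).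
  pose proof (scaled_growing _ w2 (GT 0%nat 1%nat) W2) as S2.
  pose proof (scaled_growing _ w3 (GF (S m) n) W3) as S3.
  pose proof (scaled_growing _ w4 (GF m (S n)) W4) as S4.
  cbv beta in S2, S3, S4.
  assert (B1 := absorb_limit (fun N => fT N 1%nat 0%nat)
    (fun N => K + w2 * fT N 0%nat 1%nat + w3 * fF N (S m) n + w4 * fF N m (S n)) w1 (gT 1%nat 0%nat) v
    (GT _ _) ltac:(intros N; pose proof (S2 N); pose proof (S3 N); pose proof (S4 N); lra)
    W1 (LT _ _) ltac:(intros N; specialize (Hb N); lra)).
  assert (B2 := absorb_limit (fun N => fT N 0%nat 1%nat)
    (fun N => w1 * gT 1%nat 0%nat + K + w3 * fF N (S m) n + w4 * fF N m (S n)) w2 (gT 0%nat 1%nat) v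
    (GT _ _) ltac:(intros N; pose proof (S3 N); pose proof (S4 N); lra)
    W2 (LT _ _) ltac:(intros N; specialize (B1 N); lra)).
  assert (B3 := absorb_limit (fun N => fF N (S m) n)
    (fun N => w1 * gT 1%nat 0%nat + w2 * gT 0%nat 1%nat + K + w4 * fF N m (S n)) w3 (gF (S m) n) v
    (GF _ _) ltac:(intros N; pose proof (S4 N); lra)
    W3 (LF _ _) ltac:(intros N; specialize (B2 N); lra)).
  assert (B4 := absorb_limit (fun N => fF N m (S n))
    (fun N => w1 * gT 1%nat 0%nat + w2 * gT 0%nat 1%nat + w3 * gF (S m) n + K) w4 (gF m (S n)) v
    (GF _ _) ltac:(intros N; lra)
    W4 (LF _ _) ltac:(intros N; specialize (B3 N); lra)).
  specialize (B4 O). lra.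
Qed.

Lemma lookahead_cv (fT fF : nat -> nat -> nat -> R) (gT gF : nat -> nat -> R) (m n : nat) :
  (forall i j, Un_cv (fun N => fT N i j) (gT i j)) ->
  (forall i j, Un_cv (fun N => fF N i j) (gF i j)) ->
  Un_cv (fun N => lookahead p q lam d a (fT N) (fF N) m n) (lookahead p q lam d a gT gF m n).
Proof.
  intros CT CF. unfold lookahead.
  repeat apply CV_plus; try apply Un_cv_const;
    apply (CV_mult (fun _ => _)); auto using Un_cv_const.
Qed.

(** Raising every cost-to-go value by at most c >= 0 raises the lookahead by at
    most c, since the continuation weights sum to 1-p <= 1. *)
Lemma lookahead_le_shift (fT fF gT gF : nat -> nat -> R) (m n : nat) (c : R) :
  0 <= c -> (forall i j, fT i j <= gT i j + c) -> (forall i j, fF i j <= gF i j + c) ->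
  lookahead p q lam d a fT fF m n <= lookahead p q lam d a gT gF m n + c.
Proof.
  intros Hc HT HF. unfold lookahead.
  assert (Hw : forall w x y, 0 <= w -> x <= y + c -> w * x <= w * y + w * c)
    by (intros; rewrite <- Rmult_plus_distr_l; apply Rmult_le_compat_l; auto).
  assert (0 <= a * (1 - p)) by (apply Rmult_le_pos; lra).
  assert (0 <= (1 - a) * (1 - p)) by (apply Rmult_le_pos; lra).
  pose proof (Hw (a * (1 - p) * q) _ _ ltac:(apply Rmult_le_pos; lra) (HT 1%nat 0%nat)).
  pose proof (Hw (a * (1 - p) * (1 - q)) _ _ ltac:(apply Rmult_le_pos; lra) (HT 0%nat 1%nat)).
  pose proof (Hw ((1 - a) * (1 - p) * q) _ _ ltac:(apply Rmult_le_pos; lra) (HF (S m) n)).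
  pose proof (Hw ((1 - a) * (1 - p) * (1 - q)) _ _ ltac:(apply Rmult_le_pos; lra) (HF m (S n))).
  assert (p * c >= 0) by (apply Rle_ge, Rmult_le_pos; lra).
  nra.
Qed.

End LookaheadProperties.

(** "Place with probability a, then from the lattice state (i,j) reached follow
    the policy sig i j as if started afresh there." *)
Definition restart (a : R) (sig : nat -> nat -> policy) : policy :=
  fun h s => match h with
             | [] => a
             | _ :: h' => match origin h' s with Cont i j => sig i j h' s | _ => 0 end
             end.

Lemma restart_valid (a : R) (sig : nat -> nat -> policy) :
  0 <= a <= 1 -> (forall i j, valid_policy (sig i j)) -> valid_policy (restart a sig).
Proof.
  intros Ha Hsig [|x h] s; simpl; [exact Ha|].
  destruct (origin h s); [apply Hsig | lra | lra].
Qed.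

Lemma costN_restart p q lam d a sig x N i j :
  costN p q lam d (continuation (restart a sig) x) N [] (Cont i j) =
  costN p q lam d (sig i j) N [] (Cont i j).
Proof.
  apply costN_origin_congr. intros h' s' Horig.
  unfold continuation, restart. simpl in Horig. rewrite Horig. reflexivity.
Qed.

Lemma Rmin_le_convex (a x y : R) : 0 <= a <= 1 -> Rmin x y <= a * x + (1 - a) * y.
Proof.
  intros Ha. pose proof (Rmin_l x y); pose proof (Rmin_r x y).
  replace (Rmin x y) with (a * Rmin x y + (1 - a) * Rmin x y) by ring.
  apply Rplus_le_compat; apply Rmult_le_compat_l; lra.
Qed.

Lemma le_of_geometric_bound (c K x : R) :
  0 <= c < 1 -> (forall N, x <= c ^ N * K) -> x <= 0.
Proof.
  intros Hc H. destruct (Rle_or_lt x 0) as [|Hx]; [assumption|].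
  assert (HK : 0 < K) by (specialize (H O); simpl in H; lra).
  destruct (pow_lt_1_zero c ltac:(rewrite Rabs_right; lra) (x / K)) as [N HN];
    [apply Rdiv_lt_0_compat; lra|].
  specialize (HN N (le_n N)). specialize (H N).
  rewrite Rabs_right in HN by (apply Rle_ge, pow_le; lra).
  assert (c ^ N * K < x / K * K) by (apply Rmult_lt_compat_r; lra).
  field_simplify in H0; lra.
Qed.

Section Bellman.

Variables (p q lam : R) (d : R -> R) (J : nat -> nat -> R).
Hypotheses (Hp : 0 < p < 1) (Hq : 0 <= q <= 1) (Hlam : 0 <= lam)
           (Hd : forall m n, 0 <= dmn d m n)
           (Hmono : forall m n, dmn d m n <= dmn d (S m) n /\ dmn d m n <= dmn d m (S n))
           (HJ : is_optimal_cost p q lam d J).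

Let Hp01 : 0 <= p <= 1. Proof. lra. Qed.

Local Notation cost := (costN p q lam d).

Lemma cost_growing (pi : policy) (m n : nat) :
  valid_policy pi -> Un_growing (fun N => cost pi N [] (Cont m n)).
Proof. intros Hpi N. apply costN_growing; auto. Qed.

Lemma J_below_limits (pi : policy) (i j : nat) (l : R) :
  valid_policy pi -> Un_cv (fun N => cost pi (S N) [] (Cont i j)) l -> J i j <= l.
Proof. intros Hpi Hl. apply (proj1 (HJ i j) pi); [exact Hpi | apply Un_cv_unshift, Hl]. Qed.

Lemma eps_optimal_family (eps : R) : 0 < eps ->
  exists (sig : nat -> nat -> policy) (val : nat -> nat -> R), forall i j,
    valid_policy (sig i j) /\ total_cost p q lam d (sig i j) i j (val i j) /\ val i j < J i j + eps.
Proof.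
  intros Heps.
  assert (Hex : forall i j, exists pv : policy * R, valid_policy (fst pv) /\
            total_cost p q lam d (fst pv) i j (snd pv) /\ snd pv < J i j + eps).
  { intros i j. destruct (proj2 (HJ i j) eps Heps) as (pi & v & H). exists (pi, v). exact H. }
  exists (fun i j => fst (proj1_sig (constructive_indefinite_description _ (Hex i j)))),
         (fun i j => snd (proj1_sig (constructive_indefinite_description _ (Hex i j)))).
  intros i j. exact (proj2_sig (constructive_indefinite_description _ (Hex i j))).
Qed.

(** J(m,n) is at most the cost of placing with probability a and then acting
    near-optimally. *)
Lemma J_le_mixture (m n : nat) (a : R) : 0 <= a <= 1 ->
  J m n <= a * c_p p q lam d J m n + (1 - a) * c_np p q d J m n.
Proof.
  intros Ha. rewrite <- lookahead_mix. apply le_epsilon. intros eps Heps.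
  destruct (eps_optimal_family eps Heps) as (sig & val & Hsig).
  set (sigcost := fun N i j => cost (sig i j) (S N) [] (Cont i j)).
  assert (Hcost : total_cost p q lam d (restart a sig) m n (lookahead p q lam d a val val m n)).
  { apply Un_cv_unshift, Un_cv_unshift.
    apply Un_cv_ext with (fun N => lookahead p q lam d a (sigcost N) (sigcost N) m n).
    - intros N. rewrite costN_first_step. unfold lookahead, sigcost. cbv beta.
      rewrite !costN_restart. reflexivity.
    - apply lookahead_cv; intros i j; exact (Un_cv_tail _ _ (proj1 (proj2 (Hsig i j)))). }
  apply Rle_trans with (lookahead p q lam d a val val m n).
  - apply (proj1 (HJ m n) (restart a sig)); [apply restart_valid; auto; apply Hsig | exact Hcost].
  - apply lookahead_le_shift; auto; try lra; intros i j; apply Rlt_le, Hsig.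
Qed.

Lemma min_le_J (m n : nat) : Rmin (c_p p q lam d J m n) (c_np p q d J m n) <= J m n.
Proof.
  apply le_epsilon. intros eps Heps.
  destruct (proj2 (HJ m n) eps Heps) as (pi & v & Hpi & Hv & Hlt).
  set (a := pi [] (Cont m n)). assert (Ha : 0 <= a <= 1) by apply Hpi.
  assert (Hvalid : forall b, valid_policy (continuation pi (Cont m n, b)))
    by (intros b h s; apply Hpi).
  assert (Hla : lookahead p q lam d a J J m n <= v).
  { apply (lookahead_limit_lower p q lam d a Hp01 Hq Ha
      (fun N i j => cost (continuation pi (Cont m n, true)) (S N) [] (Cont i j))
      (fun N i j => cost (continuation pi (Cont m n, false)) (S N) [] (Cont i j))).
    1-2: intros i j N; apply costN_growing; auto.
    1-2: intros i j l; apply J_below_limits; auto.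
    intros N. unfold a. rewrite <- costN_first_step.
    exact (growing_ineq _ v (cost_growing pi m n Hpi) Hv (S (S N))). }
  rewrite lookahead_mix in Hla. pose proof (Rmin_le_convex a (c_p p q lam d J m n) (c_np p q d J m n) Ha).
  lra.
Qed.

(** The optimal cost is at least the lattice cost of the current position:
    with probability at least 1-(1-p)^N the path ends within N steps, at a
    point where d is no smaller. *)
Lemma dmn_le_J (m n : nat) : dmn d m n <= J m n.
Proof.
  apply le_epsilon. intros eps Heps.
  destruct (proj2 (HJ m n) eps Heps) as (pi & v & Hpi & Hv & Hlt).
  assert (dmn d m n - v <= 0); [|lra].
  apply (le_of_geometric_bound (1 - p) (dmn d m n)); [lra|]. intros N.
  pose proof (growing_ineq _ v (cost_growing pi m n Hpi) Hv (S N)) as Hup. cbv beta in Hup.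
  pose proof (costN_lower_bound p q lam d Hp01 Hq Hlam Hd pi Hpi Hmono N [] m n).
  lra.
Qed.

Lemma J_bellman (m n : nat) : J m n = Rmin (c_p p q lam d J m n) (c_np p q d J m n).
Proof.
  apply Rle_antisym; [apply Rmin_glb | apply min_le_J].
  - pose proof (J_le_mixture m n 1 ltac:(lra)). lra.
  - pose proof (J_le_mixture m n 0 ltac:(lra)). lra.
Qed.

End Bellman.

Lemma Rmin_diff_le (A x y B : R) : x - y <= B -> 0 <= B -> Rmin A x - Rmin A y <= B.
Proof. intros. unfold Rmin. destruct (Rle_dec A x), (Rle_dec A y); lra. Qed.

(** A bounded solution G of the fixed-point equation
      G(m,n) = min(A, a G(m+1,n) + b G(m,n+1) + D(m,n)),   a, b >= 0, a + b < 1,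
    with D nondecreasing in each coordinate, is itself nondecreasing in each
    coordinate: its possible decreases contract by the factor a + b. *)
Section MinFixedPoint.

Variables (G D : nat -> nat -> R) (A a b : R).

Local Notation rhs m n := (a * G (S m) n + b * G m (S n) + D m n).

Hypotheses (Ha : 0 <= a) (Hb : 0 <= b) (Hab : a + b < 1)
           (HD : forall m n, D m n <= D (S m) n /\ D m n <= D m (S n))
           (HG : forall m n, 0 <= G m n <= A)
           (Hfix : forall m n, G m n = Rmin A (rhs m n)).

Lemma fixed_point_increments (k : nat) : forall m n,
  G m n - G (S m) n <= (a + b) ^ k * A /\ G m n - G m (S n) <= (a + b) ^ k * A.
Proof.
  induction k as [|k IH]; intros m n.
  - simpl. pose proof (HG m n); pose proof (HG (S m) n); pose proof (HG m (S n)). lra.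
  - assert (Hk : 0 <= (a + b) ^ k * A)
      by (apply Rmult_le_pos; [apply pow_le; lra | pose proof (HG m n); lra]).
    change ((a + b) ^ S k) with ((a + b) * (a + b) ^ k).
    assert (0 <= (a + b) * (a + b) ^ k * A) by (rewrite Rmult_assoc; apply Rmult_le_pos; lra).
    destruct (IH (S m) n) as [X1 X2]; destruct (IH m (S n)) as [Y1 Y2].
    destruct (HD m n) as [D1 D2].
    pose proof (Rmin_diff_le A (rhs m n) (rhs (S m) n) ((a + b) * (a + b) ^ k * A)) as Step1.
    pose proof (Rmin_diff_le A (rhs m n) (rhs m (S n)) ((a + b) * (a + b) ^ k * A)) as Step2.
    rewrite <- !Hfix in Step1, Step2.
    split; [apply Step1 | apply Step2]; auto.
    + pose proof (Rmult_le_compat_l a _ _ Ha X1); pose proof (Rmult_le_compat_l b _ _ Hb Y1). lra.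
    + pose proof (Rmult_le_compat_l a _ _ Ha X2); pose proof (Rmult_le_compat_l b _ _ Hb Y2). lra.
Qed.

Lemma fixed_point_nondecreasing (m n : nat) : G m n <= G (S m) n /\ G m n <= G m (S n).
Proof.
  assert (Hc : 0 <= a + b < 1) by lra.
  split; [assert (G m n - G (S m) n <= 0) | assert (G m n - G m (S n) <= 0)]; try lra;
    apply (le_of_geometric_bound (a + b) A); auto; intros k; apply fixed_point_increments.
Qed.

Lemma fixed_point_rhs_nondecreasing (m n : nat) : rhs m n <= rhs (S m) n /\ rhs m n <= rhs m (S n).
Proof.
  destruct (HD m n) as [D1 D2].
  destruct (fixed_point_nondecreasing (S m) n) as [X1 X2].
  destruct (fixed_point_nondecreasing m (S n)) as [Y1 Y2].
  split.
  - pose proof (Rmult_le_compat_l a _ _ Ha X1); pose proof (Rmult_le_compat_l b _ _ Hb Y1). lra.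
  - pose proof (Rmult_le_compat_l a _ _ Ha X2); pose proof (Rmult_le_compat_l b _ _ Hb Y2). lra.
Qed.

End MinFixedPoint.

Lemma propagates_along_rays (P : nat -> nat -> Prop) :
  (forall m n, P m n -> P (S m) n /\ P m (S n)) ->
  forall m n k, P m n -> P (m + k)%nat n /\ P m (n + k)%nat.
Proof.
  intros Hstep m n k HP. split; induction k as [|k IH];
    rewrite ?Nat.add_0_r, ?Nat.add_succ_r; auto; apply Hstep, IH.
Qed.

Theorem mainTheorem10 (p q lam : R) (d : R -> R)
  (Hp : 0 < p < 1) (Hq : 0 <= q <= 1) (Hlam : 0 < lam)
  (HC1 : cond_C1 d) (HC2 : cond_C2 d) (HC3 : cond_C3 d) (HC4 : cond_C4 d)
  (J : nat -> nat -> R) (HJ : is_optimal_cost p q lam d J) :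
  (forall m n k, in_P p q lam d J m n ->
     in_P p q lam d J (m + k)%nat n /\ in_P p q lam d J m (n + k)%nat) /\
  (forall m n k, in_Pbar p q lam d J m n ->
     in_Pbar p q lam d J (m + k)%nat n /\ in_Pbar p q lam d J m (n + k)%nat).
Proof.
  assert (Hlam0 : 0 <= lam) by lra.
  pose proof (dmn_nonneg d HC4) as Hd.
  pose proof (dmn_nondecreasing d HC2) as Hmono.
  pose proof (Deltaq_nondecreasing d q HC4 Hq) as HDelta.
  split; apply propagates_along_rays.
  - (* G = J - d solves G = min(A, (1-p)q G(m+1,n) + (1-p)(1-q) G(m,n+1) + Δ_q),
       and (m,n) ∈ P_λ iff A <= the second argument of the min. *)
    set (A := lam + (1 - p) * (1 - q) * J 0%nat 1%nat + (1 - p) * q * J 1%nat 0%nat + p * d 1).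
    set (G := fun m n => J m n - dmn d m n).
    assert (Hfix : forall m n, G m n = Rmin A ((1 - p) * q * G (S m) n
                     + (1 - p) * (1 - q) * G m (S n) + Deltaq d q m n)).
    { intros m n. unfold G. rewrite (J_bellman p q lam d J Hp Hq Hlam0 Hd HJ m n).
      unfold Rmin, c_p, c_np, Deltaq, Delta1, Delta2, A.
      destruct (Rle_dec _ _), (Rle_dec _ _); lra. }
    assert (HG : forall m n, 0 <= G m n <= A).
    { intros m n. pose proof (dmn_le_J p q lam d J Hp Hq Hlam0 Hd Hmono HJ m n).
      pose proof (J_le_mixture p q lam d J Hp Hq HJ m n 1 ltac:(lra)).
      unfold G, c_p, A in *. lra. }
    pose proof (fixed_point_rhs_nondecreasing G (Deltaq d q) A ((1 - p) * q) ((1 - p) * (1 - q))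
                  ltac:(nra) ltac:(nra) ltac:(lra) HDelta HG Hfix) as Hrhs.
    intros m n HP. destruct (Hrhs m n) as [R1 R2].
    unfold in_P, c_p, c_np, G, Deltaq, Delta1, Delta2, A in *. split; lra.
  - intros m n HP. destruct (HDelta m n). unfold in_Pbar in *. split; lra.
Qed.
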